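(* Let $D$ be an integral domain, $S$ a multiplicative subset of $D$, and $M$ a torsion-free $D$-module which is a $w$-module. Then: (1) If $M$ is an $S$-SM-module, then $M$ is a $w$-locally $S$-Noetherian module. (2) If $M$ is a $w$-locally $S$-Noetherian module which has finite $w$-character, then $M$ is an $S$-SM-module.
   Context: Let $K$ be the quotient field of $D$; $I_v=(I^{-1})^{-1}$ with $I^{-1}=\{a\in K\mid aI\subseteq D\}$; $\mathrm{GV}(D)$ is the set of finitely generated ideals $J$ with $J_v=D$. For a torsion-free module $N$, $N_w=\{x\in N\otimes K\mid xJ\subseteq N\text{ for some }J\in\mathrm{GV}(D)\}$; $N$ is a $w$-module if $N_w=N$; maximal $w$-ideals are proper ideals $I$ with $I_w=I$ maximal among such. A submodule $N$ of $M$ is $S$-$w$-finite if there exist $s\in S$ and a finitely generated submodule $F$ of $M$ with $Ns\subseteq F_w\subseteq N_w$; $M$ is an $S$-SM-module if every $w$-submodule ($L_w=L$) is $S$-$w$-finite. A submodule is $S$-finite if $Ls\subseteq F\subseteq L$ for some $s\in S$ and finitely generated $F$; a module is $S$-Noetherian if every submodule is $S$-finite. $M$ is $w$-locally $S$-Noetherian if for every maximal $w$-ideal $\mathfrak{m}$ of $D$, $M_{\mathfrak{m}}$ is an $S$-Noetherian $D_{\mathfrak{m}}$-module. With $(aD:M)=\{d\in D\mid Md\subseteq aD\}$, $M$ has finite $w$-character if for each nonzero $a\in M$ with $(aD:M)\neq D$, $(aD:M)$ is contained in only finitely many maximal $w$-ideals of $D$. *)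

From HB Require Import structures.
From mathcomp Require Import all_boot all_order all_algebra fraction.
Set Implicit Arguments. Unset Strict Implicit. Unset Printing Implicit Defensive.
Import GRing.Theory.
Local Open Scope ring_scope.

(* A torsion-free D-module M is represented (as usual) inside the K-vector
   space V, i.e. as a D-submodule M of V; for a submodule N of M, N (x) K is
   identified with the K-span of N in V. *)

Section WTheory.
Variable D : idomainType.
Local Notation K := {fraction D}.

Definition inK (d : D) : K := @FracField.tofrac D d.

Definition inD (x : K) : Prop := exists d : D, x = inK d.

Definition is_ideal (I : D -> Prop) : Prop :=
  [/\ I 0, (forall x y, I x -> I y -> I (x + y)) &
      (forall r x, I x -> I (r * x))].

Definition fg_ideal (I : D -> Prop) : Prop :=
  exists g : seq D, forall x,
    I x <-> exists r : seq D, x = \sum_(i < size g) r`_i * g`_i.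

Definition invK (A : K -> Prop) : K -> Prop :=
  fun a => forall x, A x -> inD (a * x).

Definition imgK (I : D -> Prop) : K -> Prop :=
  fun x => exists2 d, I d & x = inK d.

Definition vcl (I : D -> Prop) : K -> Prop := invK (invK (imgK I)).

Definition GV (J : D -> Prop) : Prop :=
  fg_ideal J /\ (forall x, vcl J x <-> inD x).

Section Modules.
Variable V : lmodType K.

Definition submod (N : V -> Prop) : Prop :=
  [/\ N 0, (forall x y, N x -> N y -> N (x + y)) &
      (forall (d : D) x, N x -> N (inK d *: x))].

(* K-span of N, i.e. (the image of) N (x) K *)
Definition Kspan (N : V -> Prop) : V -> Prop :=
  fun x => exists (g : seq V) (c : seq K),
    (forall i, (i < size g)%N -> N g`_i) /\
    x = \sum_(i < size g) c`_i *: g`_i.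

Definition wcl (N : V -> Prop) : V -> Prop :=
  fun x => Kspan N x /\
    exists J, GV J /\ forall j, J j -> N (inK j *: x).

Definition is_wmod (N : V -> Prop) : Prop := forall x, wcl N x <-> N x.

Definition Dspan (g : seq V) : V -> Prop :=
  fun x => exists r : seq D, x = \sum_(i < size g) inK r`_i *: g`_i.

Definition subset (A B : V -> Prop) := forall x, A x -> B x.

Definition S_w_finite (S : D -> Prop) (M N : V -> Prop) : Prop :=
  exists s, S s /\ exists g : seq V,
    (forall i, (i < size g)%N -> M g`_i) /\
    (forall n, N n -> wcl (Dspan g) (inK s *: n)) /\
    subset (wcl (Dspan g)) (wcl N).

Definition S_SM (S : D -> Prop) (M : V -> Prop) : Prop :=
  forall L, submod L -> subset L M -> is_wmod L -> S_w_finite S M L.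
End Modules.

(* ideals of D viewed inside K (the regular K-module K^o) *)
Definition w_ideal (P : D -> Prop) : Prop :=
  is_ideal P /\ forall x : K^o, @wcl K^o (imgK P) x <-> imgK P x.

Definition max_w_ideal (P : D -> Prop) : Prop :=
  [/\ w_ideal P, ~ (forall d, P d) &
      forall Q, w_ideal Q -> ~ (forall d, Q d) ->
        (forall d, P d -> Q d) -> forall d, Q d -> P d].

Section Local.
Variable V : lmodType K.

Definition Dloc (P : D -> Prop) : K -> Prop :=
  fun x => exists a b, ~ P b /\ x = inK a / inK b.

Definition Mloc (P : D -> Prop) (M : V -> Prop) : V -> Prop :=
  fun v => exists x b, [/\ M x, ~ P b & v = (inK b)^-1 *: x].

Definition submod_loc (P : D -> Prop) (L : V -> Prop) : Prop :=
  [/\ L 0, (forall x y, L x -> L y -> L (x + y)) &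
      (forall r x, Dloc P r -> L x -> L (r *: x))].

Definition Dlocspan (P : D -> Prop) (g : seq V) : V -> Prop :=
  fun x => exists r : seq K, (forall i, (i < size g)%N -> Dloc P r`_i) /\
    x = \sum_(i < size g) r`_i *: g`_i.

Definition S_noeth_loc (S : D -> Prop) (P : D -> Prop) (M : V -> Prop) : Prop :=
  forall L, submod_loc P L -> subset L (Mloc P M) ->
    exists s, S s /\ exists g : seq V,
      (forall n, L n -> Dlocspan P g (inK s *: n)) /\
      subset (Dlocspan P g) L.

Definition w_loc_S_noeth (S : D -> Prop) (M : V -> Prop) : Prop :=
  forall P, max_w_ideal P -> S_noeth_loc S P M.

Definition colon (a : V) (M : V -> Prop) : D -> Prop :=
  fun d => forall x, M x -> exists e : D, inK d *: x = inK e *: a.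

Definition fin_w_char (M : V -> Prop) : Prop :=
  forall a, M a -> a <> 0 -> ~ (forall d, colon a M d) ->
    exists (n : nat) (f : 'I_n -> D -> Prop),
      forall P, max_w_ideal P -> (forall d, colon a M d -> P d) ->
        exists i, forall d, P d <-> f i d.
End Local.

Definition mult_subset (S : D -> Prop) : Prop :=
  S 1 /\ forall x y, S x -> S y -> S (x * y).
End WTheory.

(* (1) For a maximal w-ideal P and a D_P-submodule L of M_P, the contraction
   N = L ∩ M is a w-submodule of M: a GV-ideal always meets D \ P, so taking
   the w-closure never leaves L.  Hence N is S-w-finite, and localizing at P
   turns this into the S-finiteness of L.
   (2) Let L be a w-submodule of M and a a nonzero element of L.  Only finitely
   many maximal w-ideals P_1, ..., P_n contain (aD : M); localizing at P_i gives
   s_i in S and a finite F_i ⊆ L with s_i L ⊆ (D F_i)_{P_i}, while at any other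
   maximal w-ideal P some d in (aD : M) \ P gives d L ⊆ D a.  So for
   s = s_1 ... s_n and F = a, F_1, ..., F_n we get s L ⊆ (D F)_P for every
   maximal w-ideal P, and the local-global principle N_w = ⋂_P N_P yields
   s L ⊆ (D F)_w.  That principle comes from Zorn's lemma: an ideal I with
   I_w ≠ D lies in a maximal w-ideal. *)

From HB Require Import structures.
From mathcomp Require Import all_boot all_order all_algebra fraction.
From mathcomp Require Import boolp classical_sets.
Set Implicit Arguments. Unset Strict Implicit. Unset Printing Implicit Defensive.
Import GRing.Theory.
Local Open Scope ring_scope.
Local Open Scope classical_set_scope.

Lemma scaler_regular (R : pzRingType) (a x : R^o) : a *: x = a * x.
Proof. by []. Qed.

Section CoefficientSpan.
Variables (R : pzRingType) (W : lmodType R) (C : R -> Prop).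

(* Modules over the scalars in C: [submod], [submod_loc] and [is_ideal] are
   the cases C = D, C = D_P, and C = D acting on D^o. *)
Definition csubmod (N : W -> Prop) : Prop :=
  [/\ N 0, (forall x y, N x -> N y -> N (x + y)) &
      (forall a x, C a -> N x -> N (a *: x))].

Definition cspan (g : seq W) : W -> Prop :=
  fun x => exists r : seq R, (forall i, (i < size g)%N -> C r`_i) /\
    x = \sum_(i < size g) r`_i *: g`_i.

Lemma csubmod_sum (N : W -> Prop) (g : seq W) (r : seq R) : csubmod N ->
  (forall i, (i < size g)%N -> N g`_i) -> (forall i, (i < size g)%N -> C r`_i) ->
  N (\sum_(i < size g) r`_i *: g`_i).
Proof.
move=> [N0 ND NZ] Ng Cr; apply: big_ind => // i _.
by apply: NZ; [apply: Cr | apply: Ng].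
Qed.

Lemma cspan_min (N : W -> Prop) (g : seq W) : csubmod N ->
  (forall z, z \in g -> N z) -> cspan g `<=` N.
Proof.
move=> hN Ng _ [r [Cr ->]]; apply: csubmod_sum => // i ig.
by apply: Ng; apply: mem_nth.
Qed.

Hypotheses (C0 : C 0) (C1 : C 1) (CD : forall a b, C a -> C b -> C (a + b))
  (CM : forall a b, C a -> C b -> C (a * b)).

Lemma cspan_csubmod (g : seq W) : csubmod (cspan g).
Proof.
split.
- exists [::]; split=> [i _|]; first by rewrite nth_nil.
  by rewrite big1 // => i _; rewrite nth_nil scale0r.
- move=> _ _ [r1 [C1r ->]] [r2 [C2r ->]].
  exists (mkseq (fun i => r1`_i + r2`_i) (size g)); split.
    by move=> i ig; rewrite nth_mkseq //; apply: CD; [apply: C1r | apply: C2r].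
  by rewrite -big_split; apply: eq_bigr => i _; rewrite nth_mkseq ?scalerDl.
- move=> a _ Ca [r [Cr ->]]; exists (mkseq (fun i => a * r`_i) (size g)); split.
    by move=> i ig; rewrite nth_mkseq //; apply: CM => //; apply: Cr.
  by rewrite scaler_sumr; apply: eq_bigr => i _; rewrite nth_mkseq ?scalerA.
Qed.

Lemma cspan_gen (g : seq W) z : z \in g -> cspan g z.
Proof.
move=> zg; have zi : (index z g < size g)%N by rewrite index_mem.
exists (mkseq (fun i => (i == index z g)%:R) (size g)); split.
  by move=> i ig; rewrite nth_mkseq //; case: eqP.
rewrite (bigD1 (Ordinal zi)) //= big1 ?addr0 => [|i /eqP neq].
  by rewrite nth_mkseq // eqxx scale1r nth_index.
rewrite nth_mkseq //; case: eqP => [iz|_]; last by rewrite scale0r.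
by case: neq; apply: val_inj.
Qed.

End CoefficientSpan.

Lemma csubmod_sub (R : pzRingType) (W : lmodType R) (C C' : R -> Prop)
  (N : W -> Prop) : C `<=` C' -> csubmod C' N -> csubmod C N.
Proof. by move=> CC' [N0 ND NZ]; split=> // a x /CC'; apply: NZ. Qed.

Lemma csubmodI (R : pzRingType) (W : lmodType R) (C : R -> Prop)
  (A B : W -> Prop) : csubmod C A -> csubmod C B -> csubmod C (A `&` B).
Proof.
move=> [A0 AD AZ] [B0 BD BZ]; split=> // [x y [Ax Bx] [Ay By]|a x Ca [Ax Bx]].
  by split; [apply: AD | apply: BD].
by split; [apply: AZ | apply: BZ].
Qed.

Lemma Zorn_nonempty_chains (T : Type) (P : set (set T)) : P !=set0 ->
  (forall F, F `<=` P -> F !=set0 -> total_on F subset ->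
     P (\bigcup_(X in F) X)) ->
  exists A, P A /\ forall B, P B -> A `<=` B -> B `<=` A.
Proof.
move=> [A0 PA0] hchain.
pose R (A B : {A | P A}) := `[< sval A `<=` sval B >].
have [t tmax] : exists t, premaximal R t.
  apply: (ZL_preorder (exist _ A0 PA0)).
  - by move=> t; apply/asboolP.
  - by move=> r s t /asboolP rs /asboolP st; apply/asboolP => x /rs /st.
  move=> F Ftot; have [[s Fs]|F0] := pselect (F !=set0); last first.
    by exists (exist _ A0 PA0) => s Fs; case: F0; exists s.
  have PU : P (\bigcup_(X in sval @` F) X).
    apply: hchain; first by move=> _ [u _ <-]; exact: svalP.
      by exists (sval s), s.
    move=> _ _ [u Fu <-] [v Fv <-].
    by case: (Ftot u v Fu Fv) => /asboolP; [left|right].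
  exists (exist _ _ PU) => u Fu; apply/asboolP => x ux.
  by exists (sval u) => //; exists u.
exists (sval t); split=> [|B PB tB]; first exact: svalP.
by have /asboolP := tmax (exist _ B PB) (asboolT tB).
Qed.

Lemma chain_seq_bound (T : eqType) (F : set (set T)) : F !=set0 ->
  total_on F subset -> forall s : seq T,
  (forall z, z \in s -> (\bigcup_(X in F) X) z) ->
  exists2 X, F X & forall z, z \in s -> X z.
Proof.
move=> [X0 FX0] Ftot; elim=> [|z s IH] hs; first by exists X0.
have [X FX sX] : exists2 X, F X & forall z, z \in s -> X z.
  by apply: IH => w ws; apply: hs; rewrite in_cons ws orbT.
have [Y FY Yz] := hs z (mem_head _ _).
have [XY|YX] := Ftot X Y FX FY.
  by exists Y => // w; rewrite in_cons => /orP [/eqP -> // | /sX /XY].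
by exists X => // w; rewrite in_cons => /orP [/eqP -> | /sX //]; apply: YX.
Qed.

Section Ideals.
Variable D : idomainType.
Local Notation K := {fraction D}.

Lemma inK0 : inK (0 : D) = 0. Proof. exact: rmorph0. Qed.
Lemma inK1 : inK (1 : D) = 1. Proof. exact: rmorph1. Qed.
Lemma inKD (a b : D) : inK (a + b) = inK a + inK b. Proof. exact: rmorphD. Qed.
Lemma inKM (a b : D) : inK (a * b) = inK a * inK b. Proof. exact: rmorphM. Qed.
Lemma inK_eq0 (a : D) : (inK a == 0) = (a == 0). Proof. exact: tofrac_eq0. Qed.
Lemma inK_inj : injective (@inK D).
Proof. by move=> a b /eqP; rewrite tofrac_eq => /eqP. Qed.

Lemma inD_inK (d : D) : inD (inK d). Proof. by exists d. Qed.
Lemma inD0 : inD (0 : K). Proof. by exists 0; rewrite inK0. Qed.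
Lemma inD1 : inD (1 : K). Proof. by exists 1; rewrite inK1. Qed.
Lemma inDD (x y : K) : inD x -> inD y -> inD (x + y).
Proof. by move=> [a ->] [b ->]; exists (a + b); rewrite inKD. Qed.
Lemma inDM (x y : K) : inD x -> inD y -> inD (x * y).
Proof. by move=> [a ->] [b ->]; exists (a * b); rewrite inKM. Qed.

(* If D is a field, the zero ideal is a GV-ideal, so GV-ideals need not meet
   the complement of a maximal w-ideal; this case is treated separately. *)
Definition is_field : Prop := forall x : K, inD x.

Definition dspan (g : seq D) : D -> Prop :=
  fun x => exists r : seq D, x = \sum_(i < size g) r`_i * g`_i.

Lemma dspan_gen (g : seq D) z : z \in g -> dspan g z.
Proof.
move=> /(@cspan_gen D D^o (fun _ => True)) [] // r [_ ->].
by exists r.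
Qed.

Lemma dspan_min (Q : D -> Prop) (g : seq D) : is_ideal Q ->
  (forall z, z \in g -> Q z) -> dspan g `<=` Q.
Proof.
move=> [Q0 QD QM] Qg _ [r ->]; apply: big_ind => // i _.
by apply: QM; apply: Qg; apply: mem_nth.
Qed.

Lemma ideal_mulr (Q : D -> Prop) d : is_ideal Q -> is_ideal (fun x => Q (x * d)).
Proof.
move=> [Q0 QD QM]; split=> [|x y Qx Qy|r x Qx]; first by rewrite mul0r.
  by rewrite mulrDl; apply: QD.
by rewrite -mulrA; apply: QM.
Qed.

Lemma GV_inv (J : D -> Prop) (x : K) : GV J ->
  (forall j, J j -> inD (x * inK j)) -> inD x.
Proof.
move=> [_ hv] hJ; have /(_ x) := (hv 1).2 inD1.
by rewrite mul1r; apply=> _ [j Jj ->]; apply: hJ.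
Qed.

Lemma GV_of (J : D -> Prop) : fg_ideal J ->
  (forall x, (forall j, J j -> inD (x * inK j)) -> inD x) -> GV J.
Proof.
move=> fgJ hJ; split=> // x; split=> [hx | [d ->] y hy].
  by have := hx 1; rewrite mulr1; apply=> _ [j _ ->]; rewrite mul1r; apply: inD_inK.
apply: inDM; first exact: inD_inK.
by apply: hJ => j Jj; apply: hy; exists j.
Qed.

Lemma GV_setT : GV (@setT D).
Proof.
apply: GV_of => [|x /(_ 1 I)]; last by rewrite inK1 mulr1.
by exists [:: 1] => x; split=> // _; exists [:: x]; rewrite big_ord1 mulr1.
Qed.

Lemma GV_eq (J : D -> Prop) : GV J -> exists g, J = dspan g.
Proof.
move=> [[g hg] _]; exists g; apply: funext => x; exact: propext.
Qed.

Lemma GV_neq0 (J : D -> Prop) : ~ is_field -> GV J -> exists2 j, J j & j != 0.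
Proof.
move=> nf hJ; apply: contrapT => nJ; apply: nf => x; apply: (GV_inv hJ) => j Jj.
have /eqP -> : j == 0 by apply: contrapT => /negP nj; apply: nJ; exists j.
by rewrite inK0 mulr0; apply: inD0.
Qed.

Lemma GV_dspan_inv (g : seq D) (x : K) : GV (dspan g) ->
  (forall z, z \in g -> inD (x * inK z)) -> inD x.
Proof.
move=> hJ hg; apply: (GV_inv hJ); apply: dspan_min hg; split.
- by rewrite inK0 mulr0; apply: inD0.
- by move=> a b ha hb; rewrite inKD mulrDr; apply: inDD.
- by move=> r a ha; rewrite inKM mulrCA; apply: inDM => //; apply: inD_inK.
Qed.

Lemma GV_mul (J1 J2 : D -> Prop) : GV J1 -> GV J2 ->
  exists2 J, GV J & forall I, is_ideal I ->
    (forall a b, J1 a -> J2 b -> I (a * b)) -> J `<=` I.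
Proof.
move=> h1 h2; have [g1 E1] := GV_eq h1; have [g2 E2] := GV_eq h2; subst J1 J2.
exists (dspan [seq a * b | a <- g1, b <- g2]).
  apply: GV_of => [|x hx]; first by exists [seq a * b | a <- g1, b <- g2].
  apply: (GV_dspan_inv h1) => a ag1; apply: (GV_dspan_inv h2) => b bg2.
  by rewrite -mulrA -inKM; apply: hx; apply: dspan_gen; apply/allpairsP; exists (a, b).
move=> I hI hab; apply: dspan_min => // _ /allpairsP [[a b] [ag bg ->]].
by apply: hab; apply: dspan_gen.
Qed.

(* The w-closure of an ideal, taken inside D.  Unlike [wcl] on K^o it has no
   K-span condition, which matters only when D is a field. *)
Definition wclD (Q : D -> Prop) : D -> Prop :=
  fun d => exists J, GV J /\ forall j, J j -> Q (j * d).

Lemma wclD_sup (Q : D -> Prop) : is_ideal Q -> Q `<=` wclD Q.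
Proof.
by move=> [_ _ QM] d Qd; exists setT; split=> [|j _]; [apply: GV_setT | apply: QM].
Qed.

Lemma wclD_seq (Q : D -> Prop) (s : seq D) : is_ideal Q ->
  (forall z, z \in s -> wclD Q z) ->
  exists J, GV J /\ forall j z, J j -> z \in s -> Q (j * z).
Proof.
move=> hQ; have [Q0 QD QM] := hQ; elim: s => [|z s IH] hs.
  by exists setT; split; [apply: GV_setT|].
have [J1 [G1 H1]] := hs z (mem_head _ _).
have [J2 [G2 H2]] : exists J, GV J /\ forall j w, J j -> w \in s -> Q (j * w).
  by apply: IH => w ws; apply: hs; rewrite in_cons ws orbT.
have [J G HJ] := GV_mul G1 G2; exists J; split=> // j u Jj us.
pose I x := forall w, w \in z :: s -> Q (x * w).
have hI : is_ideal I.
  split=> [w _|x y Ix Iy w ws|r x Ix w ws]; first by rewrite mul0r.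
    by rewrite mulrDl; apply: QD; [apply: Ix | apply: Iy].
  by rewrite -mulrA; apply: QM; apply: Ix.
apply: (HJ I hI) us => // a b J1a J2b w; rewrite in_cons => /orP [/eqP -> | ws].
  by rewrite mulrAC mulrC; apply: QM; apply: H1.
by rewrite -mulrA; apply: QM; apply: H2.
Qed.

Lemma wclD_ideal (Q : D -> Prop) : is_ideal Q -> is_ideal (wclD Q).
Proof.
move=> hQ; have [Q0 QD QM] := hQ; split=> [|x y hx hy|r x [J [G HJ]]].
- exact: wclD_sup.
- have [J [G HJ]] : exists J, GV J /\ forall j z, J j -> z \in [:: x; y] -> Q (j * z).
    by apply: wclD_seq => // z; rewrite !inE => /orP [] /eqP ->.
  exists J; split=> // j Jj; rewrite mulrDr.
  by apply: QD; apply: HJ; rewrite ?inE ?eqxx ?orbT.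
- by exists J; split=> // j Jj; rewrite mulrCA; apply: QM; apply: HJ.
Qed.

Lemma wclD_idem (Q : D -> Prop) : is_ideal Q -> wclD (wclD Q) 1 -> wclD Q 1.
Proof.
move=> hQ [J [G HJ]]; have [g Eg] := GV_eq G; subst J.
have [J' [G' H']] : exists J, GV J /\ forall j z, J j -> z \in g -> Q (j * z).
  by apply: wclD_seq => // z zg; rewrite -[z]mulr1; apply: HJ; apply: dspan_gen.
have [J'' G'' H''] := GV_mul G' G; exists J''; split=> // j J''j.
rewrite mulr1; apply: (H'' Q hQ) => // a b J'a gb.
rewrite mulrC; apply: (dspan_min (ideal_mulr a hQ)) gb => z zg.
by rewrite mulrC; apply: H'.
Qed.

Lemma nth_map_inK (r : seq D) i : (map (@inK D) r)`_i = inK r`_i.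
Proof.
case: (ltnP i (size r)) => ir; first by rewrite (nth_map 0).
by rewrite !nth_default ?size_map ?inK0.
Qed.

Section Modules.
Variable V : lmodType K.

Lemma Kspan_scale (N : V -> Prop) a x : N x -> Kspan N (a *: x).
Proof. by move=> Nx; exists [:: x], [:: a]; split=> [[]|] //; rewrite big_ord1. Qed.

Lemma wcl_mono (A B : V -> Prop) : A `<=` B -> wcl A `<=` wcl B.
Proof.
move=> AB x [[g [c [hg ->]]] [J [hJ hJx]]]; split.
  by exists g, c; split=> // i /hg /AB.
by exists J; split=> // j /hJx /AB.
Qed.

Lemma submod_csubmod (N : V -> Prop) : submod N <-> csubmod (@inD D) N.
Proof.
split=> -[N0 ND NZ]; split=> //.
  by move=> a x [d ->]; apply: NZ.
by move=> d x; apply: NZ; apply: inD_inK.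
Qed.

Lemma wcl_self (N : V -> Prop) : submod N -> N `<=` wcl N.
Proof.
move=> [_ _ NZ] x Nx; split; first by rewrite -[x]scale1r; apply: Kspan_scale.
by exists setT; split=> [|j _]; [apply: GV_setT | apply: NZ].
Qed.

Lemma DspanE (g : seq V) x : Dspan g x <-> cspan (@inD D) g x.
Proof.
split=> [[r ->] | [r [hr ->]]].
  exists (map (@inK D) r); split=> [i _|]; first by rewrite nth_map_inK; apply: inD_inK.
  by apply: eq_bigr => i _; rewrite nth_map_inK.
have [f hf] : {f : nat -> D & forall i, (i < size g)%N -> r`_i = inK (f i)}.
  apply: (@choice _ _ (fun i d => (i < size g)%N -> r`_i = inK d)) => i.
  by case: (ltnP i (size g)) => [/hr [d ->] | gi]; [exists d | exists 0].
by exists (mkseq f (size g)); apply: eq_bigr => i _; rewrite nth_mkseq // -hf.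
Qed.

Lemma Dspan_submod (g : seq V) : submod (Dspan g).
Proof.
apply/submod_csubmod; have [N0 ND NZ] := cspan_csubmod inD0 inDD inDM g.
split=> [|x y /DspanE hx /DspanE hy|a x Ca /DspanE hx]; apply/DspanE.
- exact: N0.
- exact: ND.
- exact: NZ.
Qed.

Lemma Dspan_gen (g : seq V) z : z \in g -> Dspan g z.
Proof. by move=> zg; apply/DspanE; apply: (cspan_gen inD0 inD1). Qed.

Lemma Dspan_min (N : V -> Prop) (g : seq V) : submod N ->
  (forall z, z \in g -> N z) -> Dspan g `<=` N.
Proof. by move=> /submod_csubmod hN Ng x /DspanE; apply: cspan_min. Qed.

Lemma Dspan_subset (F G : seq V) : {subset F <= G} -> Dspan F `<=` Dspan G.
Proof.
by move=> FG; apply: Dspan_min; [apply: Dspan_submod | move=> z /FG /Dspan_gen].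
Qed.

End Modules.

Lemma imgK_submod (Q : D -> Prop) : is_ideal Q -> @submod D K^o (imgK Q).
Proof.
move=> [Q0 QD QM]; split=> [|_ _ [a Qa ->] [b Qb ->]|d _ [a Qa ->]].
- by exists 0; rewrite ?inK0.
- by exists (a + b); rewrite ?inKD //; apply: QD.
- by exists (d * a); rewrite ?inKM //; apply: QM.
Qed.

Lemma w_ideal_of_wclD (Q : D -> Prop) : is_ideal Q -> wclD Q `<=` Q -> w_ideal Q.
Proof.
move=> hQ wQ; split=> // x; split=> [[_ [J [hJ hJx]]] | Qx]; last first.
  exact: (wcl_self (imgK_submod hQ)).
have [d xd] : inD x.
  apply: (GV_inv hJ) => j /hJx [q _ e].
  by rewrite mulrC -scaler_regular e; apply: inD_inK.
exists d => //; apply: wQ; exists J; split=> // j /hJx [q Qq e].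
by have /inK_inj -> : inK (j * d) = inK q by rewrite inKM -xd.
Qed.

Lemma w_ideal_GV_cancel (Q J : D -> Prop) d : w_ideal Q -> GV J ->
  (forall j, J j -> Q (j * d)) -> Q d \/ (forall j, J j -> j = 0).
Proof.
move=> [hQ wQ] hJ hJd.
have [[j Jj nj] | nJ] := pselect (exists2 j, J j & j != 0); last first.
  by right=> j Jj; apply/eqP; apply: contrapT => /negP nj; apply: nJ; exists j.
left; have [q Qq /inK_inj -> //] : imgK Q (inK d : K^o).
apply/wQ; split.
  have -> : (inK d : K^o) = (inK j)^-1 *: (inK (j * d) : K^o).
    by rewrite inKM scaler_regular mulKf ?inK_eq0.
  by apply: Kspan_scale; exists (j * d); last by []; apply: hJd.
by exists J; split=> // i Ji; exists (i * d); rewrite ?inKM //; apply: hJd.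
Qed.

Lemma bigcup_chain_ideal (F : set (set D)) : F `<=` @is_ideal D -> F !=set0 ->
  total_on F subset -> is_ideal (\bigcup_(X in F) X).
Proof.
move=> Fideal F0 Ftot; split=> [|x y Ux Uy|r x [X FX Xx]].
- by case: F0 => X FX; exists X => //; case: (Fideal X FX).
- have [X FX Xxy] : exists2 X, F X & forall z, z \in [:: x; y] -> X z.
    by apply: chain_seq_bound => // z; rewrite !inE => /orP [] /eqP ->.
  exists X => //; case: (Fideal X FX) => _ XD _.
  by apply: XD; apply: Xxy; rewrite !inE eqxx ?orbT.
- by exists X => //; case: (Fideal X FX) => _ _; apply.
Qed.

Lemma bigcup_chain_wclD1 (F : set (set D)) : F `<=` @is_ideal D -> F !=set0 ->
  total_on F subset -> wclD (\bigcup_(X in F) X) 1 -> exists2 X, F X & wclD X 1.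
Proof.
move=> Fideal F0 Ftot [J [hJ hJ1]]; have [g Eg] := GV_eq hJ; subst J.
have [X FX gX] : exists2 X, F X & forall z, z \in g -> X z.
  apply: chain_seq_bound => // z zg; rewrite -[z]mulr1.
  by apply: hJ1; apply: dspan_gen.
exists X => //; exists (dspan g); split=> // j /(dspan_min (Fideal X FX) gX).
by rewrite mulr1.
Qed.

Lemma max_w_ideal_above (I : D -> Prop) : is_ideal I -> ~ wclD I 1 ->
  exists2 P, max_w_ideal P & I `<=` P.
Proof.
move=> hI nI; pose good Q := [/\ is_ideal Q, I `<=` Q & ~ wclD Q 1].
have [P [[hP IP nP] Pmax]] : exists P, good P /\ forall Q, good Q -> P `<=` Q -> Q `<=` P.
  apply: Zorn_nonempty_chains; first by exists I; split.
  move=> F Fgood [X0 FX0] Ftot; have Fideal : F `<=` @is_ideal D by move=> X /Fgood [].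
  split.
  - exact: bigcup_chain_ideal Fideal (ex_intro _ X0 FX0) Ftot.
  - by move=> x Ix; exists X0 => //; have [_ IX0 _] := Fgood _ FX0; apply: IX0.
  - move=> /(bigcup_chain_wclD1 Fideal (ex_intro _ X0 FX0) Ftot) [X FX].
    by have [_ _] := Fgood _ FX.
have wP : wclD P `<=` P.
  apply: Pmax; last exact: wclD_sup.
  split; [exact: wclD_ideal | by move=> d /IP /(wclD_sup hP) | by move/(wclD_idem hP)].
exists P => //; split; first exact: w_ideal_of_wclD.
  by move=> Pall; apply: nP; apply: wclD_sup.
move=> Q wQ nQ PQ; apply: Pmax => //; split; [by case: wQ | by move=> d /IP /PQ |].
move=> [J [hJ hJ1]]; have [Q1|J0] := w_ideal_GV_cancel wQ hJ hJ1.
  by apply: nQ => d; rewrite -[d]mulr1; case: wQ => -[_ _ QM] _; apply: QM.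
apply: nP; exists J; split=> // j /J0 ->; rewrite mul0r; by case: hP.
Qed.

Lemma field_ideal0 (Q : D -> Prop) : is_field -> is_ideal Q ->
  ~ (forall d, Q d) -> forall d, Q d -> d = 0.
Proof.
move=> hf [_ _ QM] nQ d Qd; apply/eqP; apply: contrapT => /negP nd; apply: nQ => e.
have [c hc] := hf (inK d)^-1.
have -> : e = e * c * d by apply: inK_inj; rewrite !inKM -hc divfK ?inK_eq0.
exact: QM.
Qed.

Lemma field_max_w_ideal0 : is_field -> max_w_ideal (fun d : D => d = 0).
Proof.
move=> hf; have h0 : is_ideal (fun d : D => d = 0).
  by split=> [|x y -> ->|r x ->]; rewrite ?addr0 ?mulr0.
split=> [|/(_ 1)/eqP|Q [hQ _] nQ _]; last exact: field_ideal0.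
- split=> // x; split=> [[[g [c [hg ->]]] _]|]; last exact: (wcl_self (imgK_submod h0)).
  exists 0 => //; rewrite inK0 big1 // => i _.
  by have [_ -> ->] := hg i (ltn_ord i); rewrite inK0 scaler0.
- by rewrite oner_eq0.
Qed.

Section MaxWIdeal.
Variable P : D -> Prop.
Hypothesis hP : max_w_ideal P.

Lemma max_w_ideal_ideal : is_ideal P. Proof. by case: hP => -[]. Qed.

Lemma max_w_ideal0 : P 0. Proof. by case: max_w_ideal_ideal. Qed.

Lemma max_w_ideal1 : ~ P 1.
Proof.
case: hP => _ nP _ P1; apply: nP => d; rewrite -[d]mulr1.
by case: max_w_ideal_ideal => _ _; apply.
Qed.

Lemma max_w_ideal_GV (J : D -> Prop) : GV J -> (exists2 j, J j & ~ P j) \/ is_field.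
Proof.
move=> hJ; have [hf|nf] := pselect is_field; [by right | left].
apply: contrapT => nJ; have JP : J `<=` P.
  by move=> j Jj; apply: contrapT => nPj; apply: nJ; exists j.
have JP1 : forall j, J j -> P (j * 1) by move=> j /JP; rewrite mulr1.
have [wP _ _] := hP; have [|J0] := w_ideal_GV_cancel wP hJ JP1.
  exact: max_w_ideal1.
by have [j /J0 ->] := GV_neq0 nf hJ; rewrite eqxx.
Qed.

Lemma max_w_ideal_prime a b : P (a * b) -> P a \/ P b.
Proof.
move=> Pab; have [hf|nf] := pselect is_field.
  have [_ nP _] := hP; have /eqP := field_ideal0 hf max_w_ideal_ideal nP Pab.
  by rewrite mulf_eq0 => /orP [] /eqP ->; [left | right]; apply: max_w_ideal0.
have [Pb|nPb] := pselect (P b); [by right | left].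
have [wP _ Pmax] := hP; pose Q x := P (x * b).
have hQ : is_ideal Q := ideal_mulr b max_w_ideal_ideal.
apply: (Pmax Q _ _ _ a Pab).
- apply: w_ideal_of_wclD hQ _ => d [J [hJ hJd]].
  have hJdb : forall j, J j -> P (j * (d * b)) by move=> j /hJd; rewrite /Q mulrA.
  have [//|J0] := w_ideal_GV_cancel wP hJ hJdb.
  by have [j /J0 ->] := GV_neq0 nf hJ; rewrite eqxx.
- by move=> Qall; apply: nPb; rewrite -[b]mul1r; apply: Qall.
- by move=> x Px; case: max_w_ideal_ideal => _ _ PM; rewrite /Q mulrC; apply: PM.
Qed.

End MaxWIdeal.
End Ideals.

Lemma family_common_witness (D : idomainType) (T : eqType) (S : D -> Prop) (L : T -> Prop)
  n (Q : 'I_n -> D -> seq T -> Prop) : mult_subset S ->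
  (forall i s t F G, Q i s F -> {subset F <= G} -> Q i (t * s) G) ->
  (forall i, exists s, S s /\ exists F, (forall z, z \in F -> L z) /\ Q i s F) ->
  exists s, S s /\ exists F, (forall z, z \in F -> L z) /\ forall i, Q i s F.
Proof.
move=> [S1 SM]; elim: n Q => [|n IH] Q Qmono hQ.
  by exists 1; split=> //; exists [::]; split=> // -[].
have [s [Ss [F [FL hF]]]] := IH (fun i => Q (lift ord0 i))
  (fun i => Qmono (lift ord0 i)) (fun i => hQ (lift ord0 i)).
have [t [St [G [GL hG]]]] := hQ ord0.
exists (s * t); split; first exact: SM.
exists (F ++ G); split=> [z|i]; first by rewrite mem_cat => /orP [/FL | /GL].
have [j ->|->] := unliftP ord0 i.
  by rewrite mulrC; apply: Qmono (hF j) _ => z zF; rewrite mem_cat zF.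
by apply: Qmono hG _ => z zG; rewrite mem_cat zG orbT.
Qed.

Section Localization.
Variables (D : idomainType) (V : lmodType {fraction D}).

Section AtMaxWIdeal.
Variable P : D -> Prop.
Hypothesis hP : max_w_ideal P.

Lemma notP_neq0 b : ~ P b -> inK b != 0.
Proof.
by move=> nb; rewrite inK_eq0; apply/eqP => b0; apply: nb; rewrite b0; apply: max_w_ideal0.
Qed.

Lemma notP_mul b e : ~ P b -> ~ P e -> ~ P (b * e).
Proof. by move=> nb ne /(max_w_ideal_prime hP) []. Qed.

Lemma Dloc_inK d : Dloc P (inK d).
Proof. by exists d, 1; split; [apply: max_w_ideal1 | rewrite inK1 divr1]. Qed.

Lemma inD_Dloc x : inD x -> Dloc P x.
Proof. by move=> [d ->]; apply: Dloc_inK. Qed.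

Lemma Dloc_inv b : ~ P b -> Dloc P (inK b)^-1.
Proof. by move=> nb; exists 1, b; rewrite inK1 mul1r. Qed.

Lemma Dloc_add x y : Dloc P x -> Dloc P y -> Dloc P (x + y).
Proof.
move=> [a [b [nb ->]]] [c [e [ne ->]]]; exists (a * e + c * b), (b * e).
by split; [apply: notP_mul | rewrite addf_div ?notP_neq0 // inKD !inKM].
Qed.

Lemma Dloc_mul x y : Dloc P x -> Dloc P y -> Dloc P (x * y).
Proof.
move=> [a [b [nb ->]]] [c [e [ne ->]]]; exists (a * c), (b * e).
by split; [apply: notP_mul | rewrite mulf_div !inKM].
Qed.

Lemma Dlocspan_submod (g : seq V) : submod_loc P (Dlocspan P g).
Proof. exact: cspan_csubmod (inD_Dloc (inD0 D)) Dloc_add Dloc_mul g. Qed.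

Lemma Dlocspan_gen (g : seq V) z : z \in g -> Dlocspan P g z.
Proof. exact: (@cspan_gen _ V (Dloc P) (inD_Dloc (inD0 D)) (inD_Dloc (inD1 D)) g z). Qed.

Lemma Dlocspan_min (L : V -> Prop) (g : seq V) : submod_loc P L ->
  (forall z, z \in g -> L z) -> Dlocspan P g `<=` L.
Proof. exact: cspan_min. Qed.

Lemma submod_loc_submod (L : V -> Prop) : submod_loc P L -> submod L.
Proof. by move=> hL; apply/submod_csubmod; apply: csubmod_sub hL => x /inD_Dloc. Qed.

Lemma Dspan_Dlocspan (g : seq V) : Dspan g `<=` Dlocspan P g.
Proof.
apply: Dspan_min; first exact: submod_loc_submod (Dlocspan_submod g).
exact: Dlocspan_gen.
Qed.

Lemma MlocP (N : V -> Prop) v : Mloc P N v <-> exists2 d, ~ P d & N (inK d *: v).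
Proof.
split=> [[x [b [Nx nb ->]]] | [d nd Nd]].
  by exists b; rewrite // scalerKV ?notP_neq0.
by exists (inK d *: v), d; rewrite scalerK ?notP_neq0.
Qed.

Lemma Mloc_sup (N : V -> Prop) : N `<=` Mloc P N.
Proof.
by move=> v Nv; apply/MlocP; exists 1; rewrite ?inK1 ?scale1r //; apply: max_w_ideal1.
Qed.

Lemma Mloc_mono (A B : V -> Prop) : A `<=` B -> Mloc P A `<=` Mloc P B.
Proof. by move=> AB _ [x [b [Ax nb ->]]]; exists x, b; split=> //; apply: AB. Qed.

Lemma Mloc_submod (L : V -> Prop) : submod L -> submod_loc P (Mloc P L).
Proof.
move=> [L0 LD LZ]; split=> [|x y /MlocP [d1 n1 h1] /MlocP [d2 n2 h2]|
                           r x [a [b [nb ->]]] /MlocP [d nd h]]; apply/MlocP.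
- by exists 1; [apply: max_w_ideal1 | rewrite scaler0].
- exists (d1 * d2); first exact: notP_mul.
  by rewrite scalerDr inKM [X in X *: x]mulrC -!scalerA; apply: LD; apply: LZ.
- exists (b * d); first exact: notP_mul.
  by rewrite scalerA inKM mulrC mulrA divfK ?notP_neq0 // -scalerA; apply: LZ.
Qed.

Lemma wcl_sub_loc (N L : V -> Prop) : submod_loc P L -> N `<=` L -> wcl N `<=` L.
Proof.
move=> hL NL x [Kx [J [hJ hJx]]]; have [L0 LD LZ] := hL.
have [[j Jj nj] | hf] := max_w_ideal_GV hP hJ.
  rewrite -[x](scalerK (notP_neq0 nj)).
  by apply: LZ (Dloc_inv nj) (NL _ (hJx j Jj)).
move: Kx => [g [c [hg ->]]]; apply: (csubmod_sum hL) => i ig.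
  exact: NL (hg i ig).
exact: inD_Dloc (hf _).
Qed.

Lemma Mloc_seq_lift (L : V -> Prop) (h : seq V) :
  (forall z, z \in h -> Mloc P L z) ->
  exists F, (forall x, x \in F -> L x) /\ forall z, z \in h -> Mloc P (Dspan F) z.
Proof.
elim: h => [|z h IH] hh; first by exists [::].
have [F [FL hF]] : exists F, (forall x, x \in F -> L x) /\
    forall w, w \in h -> Mloc P (Dspan F) w.
  by apply: IH => w wh; apply: hh; rewrite in_cons wh orbT.
have [x [b [Lx nb zE]]] := hh z (mem_head _ _).
exists (x :: F); split=> [y|w]; rewrite in_cons => /orP [/eqP -> // | ].
- exact: FL.
- by exists x, b; split=> //; apply: Dspan_gen; rewrite mem_head.
- move=> /hF; apply: Mloc_mono; apply: Dspan_subset => y yF.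
  by rewrite in_cons yF orbT.
Qed.

End AtMaxWIdeal.

Lemma wcl_bigcap_Mloc (N : V -> Prop) y : submod N ->
  (forall P, max_w_ideal P -> Mloc P N y) -> wcl N y.
Proof.
move=> hN hloc; have [N0 ND NZ] := hN.
have [hf|nf] := pselect (is_field D).
  have hP0 := field_max_w_ideal0 hf; have /(MlocP hP0) [d nd Nd] := hloc _ hP0.
  have d0 : inK d != 0 by rewrite inK_eq0; apply/eqP.
  have [e he] := hf (inK d)^-1; apply: wcl_self => //.
  by rewrite -[y](scalerK d0) he; apply: NZ.
(* The conductor of y into N lies in no maximal w-ideal. *)
pose I d := N (inK d *: y).
have hI : is_ideal I.
  split=> [|a b Ia Ib|r a Ia]; rewrite /I.
  - by rewrite inK0 scale0r.
  - by rewrite inKD scalerDl; apply: ND.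
  - by rewrite inKM -scalerA; apply: NZ.
have [J [hJ hJy]] : wclD I 1.
  apply: contrapT => nI; have [P hP IP] := max_w_ideal_above hI nI.
  by have /(MlocP hP) [d nd /IP] := hloc P hP.
have {}hJy j : J j -> N (inK j *: y) by move=> /hJy; rewrite /I mulr1.
split; last by exists J.
have [j Jj nj] := GV_neq0 nf hJ.
by rewrite -[y](scalerK (_ : inK j != 0)) ?inK_eq0 //; apply: Kspan_scale; apply: hJy.
Qed.

End Localization.

Section SNoetherian.
Variables (D : idomainType) (V : lmodType {fraction D}) (S : D -> Prop).

Lemma S_SM_w_loc_S_noeth (M : V -> Prop) :
  submod M -> is_wmod M -> S_SM S M -> w_loc_S_noeth S M.
Proof.
move=> hM wM hSM P hP Lp hLp LpM; pose N := Lp `&` M.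
have NLp : N `<=` Lp by move=> x [].
have NM : N `<=` M by move=> x [].
have hN : submod N.
  have hLp' := submod_loc_submod hP hLp.
  by apply/submod_csubmod; apply: csubmodI; apply/submod_csubmod.
have wN : is_wmod N.
  move=> x; split=> [wx | /(wcl_self hN) //]; split.
    exact: (wcl_sub_loc hP hLp NLp wx).
  by apply/wM; apply: (wcl_mono NM wx).
have [s [Ss [g [_ [hs hsub]]]]] := hSM N hN NM wN.
have gN z : z \in g -> N z.
  by move=> zg; apply/wN; apply: hsub; apply: wcl_self (Dspan_submod g) _ (Dspan_gen zg).
exists s; split=> //; exists g; split; last first.
  by apply: (Dlocspan_min hLp) => z /gN [].
move=> v Lpv; have [x [b [Mx nb vE]]] := LpM v Lpv.
have Nx : N x.
  split=> //; have -> : x = inK b *: v by rewrite vE scalerKV ?(notP_neq0 hP).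
  by case: hLp => _ _; apply; [apply: Dloc_inK | ].
have := wcl_sub_loc hP (Dlocspan_submod hP g) (Dspan_Dlocspan hP (g := g)) (hs x Nx).
rewrite vE scalerA mulrC -scalerA; case: (Dlocspan_submod hP g) => _ _; apply.
exact: Dloc_inv.
Qed.

Definition loc_gen (P : D -> Prop) (L : V -> Prop) (s : D) (F : seq V) : Prop :=
  forall v, L v -> Mloc P (Dspan F) (inK s *: v).

Lemma loc_gen_mono (P : D -> Prop) (L : V -> Prop) s t (F G : seq V) :
  max_w_ideal P -> loc_gen P L s F -> {subset F <= G} -> loc_gen P L (t * s) G.
Proof.
move=> hP hF FG v Lv; rewrite inKM -scalerA.
apply: (Mloc_mono (Dspan_subset FG)).
case: (Mloc_submod hP (Dspan_submod F)) => _ _; apply; [exact: Dloc_inK | exact: hF].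
Qed.

Lemma S_noeth_loc_gen (M L : V -> Prop) (P : D -> Prop) : max_w_ideal P ->
  S_noeth_loc S P M -> submod L -> L `<=` M ->
  exists s, S s /\ exists F, (forall z, z \in F -> L z) /\ loc_gen P L s F.
Proof.
move=> hP hloc hL LM.
have [s [Ss [h [hs hsub]]]] := hloc (Mloc P L) (Mloc_submod hP hL) (Mloc_mono LM).
have [F [FL hF]] := Mloc_seq_lift (fun z zh => hsub z (Dlocspan_gen hP zh)).
exists s; split=> //; exists F; split=> // v Lv.
apply: (Dlocspan_min (Mloc_submod hP (Dspan_submod F)) hF); apply: hs.
exact: (Mloc_sup hP Lv).
Qed.

Lemma fin_w_char_cover (M : V -> Prop) a : fin_w_char M -> M a -> a <> 0 ->
  exists n (f : 'I_n -> D -> Prop), forall P, max_w_ideal P ->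
    (exists2 d, colon a M d & ~ P d) \/ exists i, P = f i.
Proof.
move=> hfin Ma a0; have [call|ncall] := pselect (forall d, colon a M d).
  by exists 0, (fun _ _ => True) => P hP; left; exists 1 => //; apply: max_w_ideal1.
have [n [f hf]] := hfin a Ma a0 ncall; exists n, f => P hP.
have [cP|ncP] := pselect (forall d, colon a M d -> P d).
  by right; have [i hi] := hf P hP cP; exists i; apply: funext => d; apply: propext.
left; apply: contrapT => nd; apply: ncP => d cd.
by apply: contrapT => nPd; apply: nd; exists d.
Qed.

Lemma colon_Mloc (P : D -> Prop) (M : V -> Prop) a d x (F : seq V) s :
  max_w_ideal P -> colon a M d -> ~ P d -> M x -> a \in F ->
  Mloc P (Dspan F) (inK s *: x).
Proof.
move=> hP cd nd Mx aF; apply/(MlocP hP); exists d => //.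
have [e de] := cd x Mx; rewrite scalerA mulrC -scalerA de.
by have [_ _ DZ] := Dspan_submod F; apply: (DZ); apply: (DZ); apply: Dspan_gen.
Qed.

Lemma S_w_finite_of (M L : V -> Prop) s (F : seq V) : submod L -> L `<=` M ->
  S s -> (forall z, z \in F -> L z) ->
  (forall x, L x -> wcl (Dspan F) (inK s *: x)) -> S_w_finite S M L.
Proof.
move=> hL LM Ss FL hF; exists s; split=> //; exists F; split.
  by move=> i iF; apply: LM; apply: FL; apply: mem_nth.
by split=> // x; apply: (wcl_mono (Dspan_min hL FL)).
Qed.

Lemma w_loc_S_noeth_S_SM (M : V -> Prop) : mult_subset S ->
  w_loc_S_noeth S M -> fin_w_char M -> S_SM S M.
Proof.
move=> hS hloc hfin L hL LM _.
have [[a [La a0]] | L0] := pselect (exists a, L a /\ a <> 0); last first.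
  apply: (S_w_finite_of (F := [::]) hL LM hS.1) => // x Lx.
  have -> : x = 0 by apply: contrapT => x0; apply: L0; exists x.
  have [D0 _ _] := Dspan_submod ([::] : seq V).
  by rewrite scaler0; apply: (wcl_self (Dspan_submod _) D0).
have [n [f hcover]] := fin_w_char_cover hfin (LM a La) a0.
pose Q i s F := max_w_ideal (f i) -> loc_gen (f i) L s F.
have [s [Ss [F [FL hF]]]] : exists s, S s /\
    exists F, (forall z, z \in F -> L z) /\ forall i, Q i s F.
  apply: family_common_witness => // [i s t F G hQ FG hPi | i].
    exact: loc_gen_mono hPi (hQ hPi) FG.
  have [hPi|nPi] := pselect (max_w_ideal (f i)); last first.
    by exists 1; split; [exact: hS.1 | exists [::]; split=> // /nPi].
  have [s [Ss [F [FL hF]]]] := S_noeth_loc_gen hPi (hloc _ hPi) hL LM.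
  by exists s; split=> //; exists F; split=> // _.
apply: (S_w_finite_of (F := a :: F) hL LM Ss) => [z | x Lx].
  by rewrite in_cons => /orP [/eqP -> | /FL].
apply: wcl_bigcap_Mloc; first exact: Dspan_submod.
move=> P hP; have [[d cd nd] | [i Pf]] := hcover P hP.
  exact: colon_Mloc hP cd nd (LM x Lx) (mem_head _ _).
subst P; rewrite -[s]mul1r; apply: loc_gen_mono hP (hF i hP) _ _ Lx.
by move=> z zF; rewrite in_cons zF orbT.
Qed.

End SNoetherian.

Theorem proposition3p5 (D : idomainType) (V : lmodType {fraction D})
  (S : D -> Prop) (M : V -> Prop) :
  mult_subset S -> submod M -> is_wmod M ->
  (S_SM S M -> w_loc_S_noeth S M) /\
  (w_loc_S_noeth S M -> fin_w_char M -> S_SM S M).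
Proof.
move=> hS hM wM; split; first exact: S_SM_w_loc_S_noeth.
exact: w_loc_S_noeth_S_SM.
Qed.
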